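(* Let $(q,E)$ be an annotated CQ for which there exists a CQ $q'$ that fits $E$ with $q\subseteq q'$. Then there is, up to equivalence, exactly one $\preceq^{\mathrm{cod}}$-generalization for $(q,E)$.
   Context: An annotated CQ $(q,E)$ consists of a $k$-ary conjunctive query $q$ (relational atoms, no constants, every answer variable occurring in an atom) and a collection $E=(E^+,E^-)$ of labeled data examples of arity $k$, where a data example is $(I,\mathbf a)$ with $I$ a finite instance and $\mathbf a$ a $k$-tuple of its values. $[\![q]\!]$ is the set of data examples $(I,\mathbf a)$ with $\mathbf a\in q(I)$; $q$ fits $E$ if $E^+\subseteq[\![q]\!]$ and $E^-\cap[\![q]\!]=\emptyset$; $\subseteq$ is query containment and $\equiv$ equivalence. $q_1\preceq^{\mathrm{cod}}_q q_2$ iff $[\![q]\!]\oplus[\![q_1]\!]\subseteq[\![q]\!]\oplus[\![q_2]\!]$ ($\oplus$ = symmetric difference), $\prec_q$ its strict part. A $\preceq^{\mathrm{cod}}$-generalization for $(q,E)$ is a CQ $q'$ fitting $E$ with $q\subseteq q'$ such that no CQ $q''$ fitting $E$ with $q\subseteq q''$ has $q''\prec^{\mathrm{cod}}_q q'$. Candidate queries range over CQs using only the relation symbols occurring in $q$ and $E$. *)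

From mathcomp Require Import all_boot.
Set Implicit Arguments. Unset Strict Implicit. Unset Printing Implicit Defensive.

(* Variables and values are natural numbers; a relation symbol is a pair
   (name, arity).  An atom / fact is a name together with an argument list;
   its relation symbol is (name, length of the list). *)
Definition atom := (nat * seq nat)%type.
Definition fact := (nat * seq nat)%type.
Definition symbol := (nat * nat)%type.
Definition sym_of (a : atom) : symbol := (a.1, size a.2).

(* A CQ: answer-variable tuple and a finite list of relational atoms
   (all terms are variables: no constants). *)
Record CQ := mkCQ { ans : seq nat; body : seq atom }.

Definition wf_cq (k : nat) (q : CQ) : Prop :=
  size (ans q) = k /\
  forall x, x \in ans q -> exists2 a, a \in body q & x \in a.2.

Definition instance := seq fact.
Definition adom (I : instance) : seq nat := flatten (map snd I).

Definition example := (instance * seq nat)%type.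
Definition inst (e : example) : instance := e.1.
Definition tup (e : example) : seq nat := e.2.

Definition wf_ex (k : nat) (e : example) : Prop :=
  size (tup e) = k /\ forall v, v \in tup e -> v \in adom (inst e).

Definition answer (q : CQ) (I : instance) (a : seq nat) : Prop :=
  exists h : nat -> nat,
    (forall t, t \in body q -> (t.1, map h t.2) \in I) /\ map h (ans q) = a.

Definition den (q : CQ) (e : example) : Prop := answer q (inst e) (tup e).

Definition labeled := (seq example * seq example)%type.
Definition pos (E : labeled) : seq example := E.1.
Definition neg (E : labeled) : seq example := E.2.

Definition wf_labeled (k : nat) (E : labeled) : Prop :=
  (forall e, e \in pos E -> wf_ex k e) /\ (forall e, e \in neg E -> wf_ex k e).

Definition fits (q : CQ) (E : labeled) : Prop :=
  (forall e, e \in pos E -> den q e) /\ (forall e, e \in neg E -> ~ den q e).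

Definition contained (q1 q2 : CQ) : Prop :=
  forall (I : instance) (a : seq nat), answer q1 I a -> answer q2 I a.
Definition equivq (q1 q2 : CQ) : Prop := contained q1 q2 /\ contained q2 q1.

Definition symdiff (k : nat) (q q1 : CQ) (e : example) : Prop :=
  wf_ex k e /\ ~ (den q e <-> den q1 e).

Definition cod_le (k : nat) (q q1 q2 : CQ) : Prop :=
  forall e, symdiff k q q1 e -> symdiff k q q2 e.
Definition cod_lt (k : nat) (q q1 q2 : CQ) : Prop :=
  cod_le k q q1 q2 /\ ~ cod_le k q q2 q1.

Definition syms (q : CQ) (E : labeled) : seq symbol :=
  map sym_of (body q) ++
  flatten (map (fun e => map sym_of (inst e)) (pos E ++ neg E)).

Definition candidate (k : nat) (q : CQ) (E : labeled) (q' : CQ) : Prop :=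
  wf_cq k q' /\ forall a, a \in body q' -> sym_of a \in syms q E.

Definition cod_generalization (k : nat) (q : CQ) (E : labeled) (q' : CQ) : Prop :=
  candidate k q E q' /\ fits q' E /\ contained q q' /\
  ~ (exists q'', candidate k q E q'' /\ fits q'' E /\ contained q q'' /\
                 cod_lt k q q'' q').

(* Let q_E be the direct product of the canonical example of q with all positive
   examples.  It is the least CQ (w.r.t. containment) that contains q and accepts every
   positive example, so it fits E as soon as some CQ containing q does.  Above q the order
   ⪯^cod is just containment, hence q_E is a ⪯^cod-generalization; any other
   generalization q1 must satisfy q1 ⪯^cod q_E, which gives q1 ⊆ q_E, while q_E ⊆ q1
   by leastness. *)
From mathcomp Require Import all_boot.
From Stdlib Require Import Classical.
Set Implicit Arguments. Unset Strict Implicit.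

Lemma contained_refl q : contained q q.
Proof. by []. Qed.

Lemma contained_trans q1 q2 q3 : contained q1 q2 -> contained q2 q3 -> contained q1 q3.
Proof. by move=> H12 H23 I a /H12 /H23. Qed.

Lemma answer_canonical q : answer q (body q) (ans q).
Proof.
exists id; split; last exact: map_id.
by move=> t Ht; rewrite map_id -surjective_pairing.
Qed.

Lemma contained_of_answer q1 q2 : answer q2 (body q1) (ans q1) -> contained q1 q2.
Proof.
move=> [h1 [Hb1 Ha1]] I a [h [Hb Ha]]; exists (h \o h1); split.
- by move=> t /Hb1 /Hb; rewrite map_comp.
- by rewrite map_comp Ha1.
Qed.

Lemma answer_of_contained q1 q2 : contained q1 q2 -> answer q2 (body q1) (ans q1).
Proof. by move/(_ _ _ (answer_canonical q1)). Qed.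

Lemma answer_wf_ex k q I a : wf_cq k q -> answer q I a -> wf_ex k (I, a).
Proof.
move=> [Hk Hocc] [h [Hb <-]]; split; first by rewrite size_map.
move=> _ /mapP [x /Hocc [t Ht Hxt] ->].
by apply/flatten_mapP; exists (t.1, map h t.2); [exact: Hb | exact: map_f].
Qed.

Lemma wf_cq_contained k p q : wf_cq k q -> contained p q -> wf_cq k p.
Proof.
move=> [Hk Hocc] /answer_of_contained [h [Hb Ha]]; rewrite /wf_cq -Ha.
split; first by rewrite size_map.
move=> _ /mapP [x /Hocc [t Ht Hxt] ->].
by exists (t.1, map h t.2); [exact: Hb | exact: map_f].
Qed.

(* Pairs of values are coded as values, so that product instances stay over [nat]. *)
Definition pair_code : nat * nat -> nat := pickle.
Definition unpair_code (n : nat) : nat * nat := odflt (0, 0) (pickle_inv n).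

Lemma pair_codeK : cancel pair_code unpair_code.
Proof. by move=> xv; rewrite /unpair_code /pair_code pickleK_inv. Qed.

Definition zip_code (xs vs : seq nat) : seq nat := map pair_code (zip xs vs).

Lemma size_zip_code xs vs : size xs = size vs -> size (zip_code xs vs) = size xs.
Proof. by move=> Hs; rewrite size_map size_zip Hs minnn. Qed.

Lemma map_fst_zip_code (h : nat -> nat) xs vs : size xs <= size vs ->
  map (h \o fst \o unpair_code) (zip_code xs vs) = map h xs.
Proof.
move=> Hs; rewrite -map_comp -[in RHS](unzip1_zip Hs) -map_comp.
by apply: eq_map => xv /=; rewrite pair_codeK.
Qed.

Lemma map_snd_zip_code (h : nat -> nat) xs vs : size vs <= size xs ->
  map (h \o snd \o unpair_code) (zip_code xs vs) = map h vs.
Proof.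
move=> Hs; rewrite -map_comp -[in RHS](unzip2_zip Hs) -map_comp.
by apply: eq_map => xv /=; rewrite pair_codeK.
Qed.

Lemma zip_code_map (h1 h2 : nat -> nat) ys :
  zip_code (map h1 ys) (map h2 ys) = map (fun y => pair_code (h1 y, h2 y)) ys.
Proof. by rewrite /zip_code zip_map -map_comp. Qed.

(* The direct product of the canonical example (body q, ans q) with the example e. *)
Definition cq_prod (q : CQ) (e : example) : CQ :=
  mkCQ (zip_code (ans q) (tup e))
       (flatten [seq [seq (t.1, zip_code t.2 f.2) |
                      f <- inst e & (f.1 == t.1) && (size f.2 == size t.2)]
                | t <- body q]).

Lemma mem_cq_prod q e t : t \in body (cq_prod q e) <->
  exists2 t0, t0 \in body q &
    exists2 f, [/\ f \in inst e, f.1 = t0.1 & size f.2 = size t0.2] &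
      t = (t0.1, zip_code t0.2 f.2).
Proof.
split.
- case/flatten_mapP=> t0 Ht0 /mapP [f].
  rewrite mem_filter => /andP [/andP [/eqP H1 /eqP H2] Hf] ->.
  by exists t0 => //; exists f.
- case=> t0 Ht0 [f [Hf H1 H2] ->]; apply/flatten_mapP; exists t0 => //.
  by apply/mapP; exists f; rewrite // mem_filter H1 H2 !eqxx.
Qed.

Lemma sym_cq_prod q e t : t \in body (cq_prod q e) ->
  exists2 t0, t0 \in body q & sym_of t = sym_of t0.
Proof.
case/mem_cq_prod=> t0 Ht0 [f [_ _ Hs] ->].
by exists t0; rewrite // /sym_of /= size_zip_code.
Qed.

Section ProductWithExample.

Variables (q : CQ) (e : example).
Hypothesis arity_qe : size (ans q) = size (tup e).

Lemma size_ans_cq_prod : size (ans (cq_prod q e)) = size (ans q).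
Proof. exact: size_zip_code. Qed.

Lemma contained_cq_prod : contained q (cq_prod q e).
Proof.
apply: contained_of_answer; exists (id \o fst \o unpair_code); split.
- move=> t /mem_cq_prod [t0 Ht0 [f [_ _ Hs] ->]] /=.
  by rewrite map_fst_zip_code ?Hs // map_id -surjective_pairing.
- by rewrite map_fst_zip_code ?arity_qe // map_id.
Qed.

Lemma cq_prod_den : den (cq_prod q e) e.
Proof.
exists (id \o snd \o unpair_code); split.
- move=> t /mem_cq_prod [t0 Ht0 [f [Hf H1 Hs] ->]] /=.
  by rewrite map_snd_zip_code ?Hs // map_id -H1 -surjective_pairing.
- by rewrite map_snd_zip_code ?arity_qe // map_id.
Qed.

Lemma cq_prod_least q' : contained q q' -> den q' e -> contained (cq_prod q e) q'.
Proof.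
move=> /answer_of_contained [h1 [Hb1 Ha1]] [h2 [Hb2 Ha2]].
apply: contained_of_answer; exists (fun y => pair_code (h1 y, h2 y)); split.
- move=> t Ht; rewrite -zip_code_map; apply/mem_cq_prod.
  exists (t.1, map h1 t.2); first exact: Hb1.
  by exists (t.1, map h2 t.2); rewrite //= !size_map; split; first exact: Hb2.
- by rewrite -zip_code_map Ha1 Ha2.
Qed.

End ProductWithExample.

Definition cq_prods (q : CQ) (es : seq example) : CQ := foldl cq_prod q es.

Section ProductWithExamples.

Variable k : nat.

Definition arity_ex (e : example) : bool := size (tup e) == k.

Lemma size_ans_cq_prods q es : size (ans q) = k -> all arity_ex es ->
  size (ans (cq_prods q es)) = k.
Proof.
elim: es q => //= e es IH q Hq /andP [/eqP He Hes].
by apply: IH => //; rewrite size_ans_cq_prod // Hq He.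
Qed.

Lemma contained_cq_prods q es : size (ans q) = k -> all arity_ex es ->
  contained q (cq_prods q es).
Proof.
elim: es q => [|e es IH] q Hq /=; first by move=> _; apply: contained_refl.
case/andP=> /eqP He Hes.
have Hqe : size (ans q) = size (tup e) by rewrite Hq He.
apply: contained_trans (contained_cq_prod Hqe) (IH _ _ Hes).
by rewrite size_ans_cq_prod.
Qed.

Lemma cq_prods_den q es : size (ans q) = k -> all arity_ex es ->
  forall e, e \in es -> den (cq_prods q es) e.
Proof.
elim: es q => //= e es IH q Hq /andP [/eqP He Hes] e'.
have Hqe : size (ans q) = size (tup e) by rewrite Hq He.
have Hk : size (ans (cq_prod q e)) = k by rewrite size_ans_cq_prod.
rewrite inE => /predU1P [->|]; last exact: IH.
exact: contained_cq_prods Hk Hes _ _ (cq_prod_den Hqe).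
Qed.

Lemma cq_prods_least q es q' : size (ans q) = k -> all arity_ex es ->
  contained q q' -> (forall e, e \in es -> den q' e) -> contained (cq_prods q es) q'.
Proof.
elim: es q => //= e es IH q Hq /andP [/eqP He Hes] Hqq' Hden.
have Hqe : size (ans q) = size (tup e) by rewrite Hq He.
apply: IH => //; first by rewrite size_ans_cq_prod.
  by apply: cq_prod_least => //; apply: Hden; rewrite mem_head.
by move=> e' He'; apply: Hden; rewrite inE He' orbT.
Qed.

End ProductWithExamples.

Lemma sym_cq_prods q es t : t \in body (cq_prods q es) ->
  exists2 t0, t0 \in body q & sym_of t = sym_of t0.
Proof.
elim: es q => [|e es IH] q /=; first by exists t.
by case/IH=> t1 /sym_cq_prod [t0 Ht0 Et1] ->; exists t0.
Qed.

Lemma cod_le_contained k q p q'' : contained q p -> contained p q'' -> cod_le k q p q''.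
Proof.
move=> Hqp Hpq'' e [Hwf Hnot]; split=> // Hiff; apply: Hnot.
by split=> [/Hqp | /Hpq'' /Hiff].
Qed.

(* Answers of q1 inside [[q]] are in [[p]] because q ⊆ p; the others are in
   [[q1]] \ [[q]], which the ⪯^cod-bound puts inside [[p]] \ [[q]]. *)
Lemma contained_cod_le k q q1 p : wf_cq k q1 -> contained q p -> cod_le k q q1 p ->
  contained q1 p.
Proof.
move=> Hq1 Hqp Hle I a Ha.
have [Hqa | Hqa] := classic (den q (I, a)); first exact: Hqp.
have [_ Hnot] := Hle (I, a) (conj (answer_wf_ex Hq1 Ha) (fun Hiff => Hqa (proj2 Hiff Ha))).
apply: NNPP => Hpa; apply: Hnot; split=> Hd; [by case: Hqa | by case: Hpa].
Qed.

Section LeastFittingQuery.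

Variables (k : nat) (q : CQ) (E : labeled).
Hypotheses (wf_q : wf_cq k q) (wf_E : wf_labeled k E).
Variable q' : CQ.
Hypotheses (cand_q' : candidate k q E q') (fits_q' : fits q' E) (q_sub_q' : contained q q').

Let qE := cq_prods q (pos E).

Let arity_pos : all (arity_ex k) (pos E).
Proof. by apply/allP=> e /wf_E.1 [He _]; apply/eqP. Qed.

Lemma contained_qE : contained q qE.
Proof. exact: contained_cq_prods wf_q.1 arity_pos. Qed.

Lemma qE_least q'' : fits q'' E -> contained q q'' -> contained qE q''.
Proof. by move=> [Hpos _] Hsub; apply: cq_prods_least wf_q.1 arity_pos Hsub Hpos. Qed.

Lemma qE_fits : fits qE E.
Proof.
split; first exact: cq_prods_den wf_q.1 arity_pos.
by move=> e He /(qE_least fits_q' q_sub_q'); apply: fits_q'.2.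
Qed.

Lemma qE_candidate : candidate k q E qE.
Proof.
split; first exact: wf_cq_contained cand_q'.1 (qE_least fits_q' q_sub_q').
by move=> a /sym_cq_prods [t0 Ht0 ->]; rewrite mem_cat map_f.
Qed.

Lemma cod_le_qE q'' : fits q'' E -> contained q q'' -> cod_le k q qE q''.
Proof. move=> Hfits Hsub; exact: cod_le_contained contained_qE (qE_least Hfits Hsub). Qed.

Lemma qE_cod_generalization : cod_generalization k q E qE.
Proof.
apply: (conj qE_candidate (conj qE_fits (conj contained_qE _))).
by case=> q'' [_ [Hfits [Hsub [_ Hnle]]]]; apply/Hnle/cod_le_qE.
Qed.

Lemma cod_generalization_equiv_qE q1 : cod_generalization k q E q1 -> equivq q1 qE.
Proof.
move=> [[wf_q1 _] [Hfits [Hsub Hmin]]]; split; last exact: qE_least.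
apply: contained_cod_le wf_q1 contained_qE _; apply: NNPP => Hnle; apply: Hmin.
exists qE; apply: (conj qE_candidate (conj qE_fits (conj contained_qE _))).
by split; first exact: cod_le_qE.
Qed.

End LeastFittingQuery.

Theorem corollary9 (k : nat) (q : CQ) (E : labeled) :
  wf_cq k q -> wf_labeled k E ->
  (exists q', candidate k q E q' /\ fits q' E /\ contained q q') ->
  (exists q', cod_generalization k q E q') /\
  (forall q1 q2, cod_generalization k q E q1 -> cod_generalization k q E q2 ->
     equivq q1 q2).
Proof.
move=> wf_q wf_E [q' [cand_q' [fits_q' q_sub_q']]].
have qE_gen := qE_cod_generalization wf_q wf_E cand_q' fits_q' q_sub_q'.
have equiv_qE := cod_generalization_equiv_qE wf_q wf_E cand_q' fits_q' q_sub_q'.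
split; first by exists (cq_prods q (pos E)).
move=> q1 q2 /equiv_qE [H1 H1'] /equiv_qE [H2 H2'].
by split; [exact: contained_trans H1 H2' | exact: contained_trans H2 H1'].
Qed.
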